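(* Let $\varphi(x)=\sum_{i\ge0}\gamma_ix^i\in\mathbb{K}[[x]]$, let $r\in\mathbb{Z}$, and stipulate $\gamma_i=0$ for $i<0$. Then $\varphi\in\mathcal{F}_r$ if and only if the following hold. If $r=2k$ is even: for each $n\ge\max\{0,1-k\}$, $$\gamma_{2n}=\frac{2}{2n+r}\sum_{i=-k}^n\binom{2n+r}{2i+r}B_{2n-2i}\gamma_{2i+1}, \qquad (\ast)$$ and, if $r\le0$, then $\gamma_{1-r}=0$ (with no condition imposed on $\gamma_{-r}$), and, when $r<0$, for $0\le n\le -k-1$, $$\gamma_{2n}=\sum_{i=0}^n\frac{2}{2i+r}\binom{-2i-r}{-2n-r}B_{2n-2i}\gamma_{2i+1}. \qquad (\ast\ast)$$ If $r=2k+1$ is odd: $(\ast)$ holds for each $n\ge\max\{0,-k\}$, and, if $r<0$, $(\ast\ast)$ holds for $0\le n\le -k-1$. In particular these conditions determine all $\gamma_{2i}$ from the $\gamma_{2i+1}$, except $\gamma_{-r}$ when $r\le0$ is even, which is unconstrained.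
   Context: $\mathbb{K}\in\{\mathbb{Q},\mathbb{R},\mathbb{C}\}$. For $r\in\mathbb{Z}$, $\mathcal{F}_r$ denotes the space of $\varphi\in\mathbb{K}[[x]]$ with $\varphi(x/(x-1))=(1-x)^r\varphi(x)$. $B_n$ is the $n$th Bernoulli number, $\frac{t}{e^t-1}=\sum_{n\ge0}B_n\frac{t^n}{n!}$. *)

From mathcomp Require Import all_boot all_order all_algebra.
Set Implicit Arguments. Unset Strict Implicit. Unset Printing Implicit Defensive.
Import Order.TTheory GRing.Theory Num.Theory.
Local Open Scope ring_scope.

Section Defs.
Variable K : numFieldType.

(* Formal power series over K, represented by their coefficient sequences:
   f : nat -> K stands for sum_n f n x^n. *)

Definition smul (f g : nat -> K) : nat -> K :=
  fun n => \sum_(i < n.+1) f i * g (n - i)%N.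

Definition sone : nat -> K := fun n => (n == 0%N)%:R.
Definition sX : nat -> K := fun n => (n == 1%N)%:R.

Definition spow (f : nat -> K) (m : nat) : nat -> K := iter m (smul f) sone.

(* 1 - x, and its inverse 1/(1-x) = sum_n x^n *)
Definition one_minus_x : nat -> K := fun n => (n == 0%N)%:R - (n == 1%N)%:R.
Definition geom : nat -> K := fun _ => 1.

(* (1-x)^r for r : int: (1-x)^m for r = m >= 0, (1/(1-x))^(m+1) for r = -(m+1) *)
Definition powr (r : int) : nat -> K :=
  match r with
  | Posz m => spow one_minus_x m
  | Negz m => spow geom m.+1
  end.

(* the series x/(x-1) = x * (x-1)^{-1} = x * (- 1/(1-x)) *)
Definition yser : nat -> K := smul sX (fun _ => -1).

(* composition f(g) for g with zero constant term:
   coefficient N is sum_{i <= N} f_i [x^N] g^i *)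
Definition scomp (f g : nat -> K) : nat -> K :=
  fun N => \sum_(i < N.+1) f i * spow g i N.

Definition inF (r : int) (phi : nat -> K) : Prop :=
  forall N : nat, scomp phi yser N = smul (powr r) phi N.

(* Bernoulli numbers, t/(e^t-1) = sum_n B_n t^n/n!.  Writing b_n = B_n/n!,
   this identity of formal power series is equivalent (multiply by
   (e^t-1)/t = sum_j t^j/(j+1)!) to b_0 = 1 and
   sum_{k<=n} b_k/(n-k+1)! = 0 for n >= 1, i.e.
   b_n = - sum_{k<n} b_k / (n-k+1)!.  bern_b_list n = [:: b_0; ...; b_n]. *)
Fixpoint bern_b_list (n : nat) : seq K :=
  match n with
  | 0%N => [:: 1]
  | m.+1 => let s := bern_b_list m in
            rcons s (- \sum_(k < m.+1) s`_k / ((m.+2 - k)`!)%:R)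
  end.

Definition bernoulli (n : nat) : K := (n`!)%:R * (bern_b_list n)`_n.

Definition zbinom (a b : int) : K :=
  if b < 0 then 0
  else (\prod_(i < absz b) (a - i%:Z)%:~R) / ((absz b)`!)%:R.

Definition gam (phi : nat -> K) (i : int) : K :=
  match i with
  | Posz m => phi m
  | Negz _ => 0
  end.

(* condition ( * ) at n, for r = 2k or 2k+1:
   gamma_{2n} = 2/(2n+r) sum_{i=-k}^n binom(2n+r,2i+r) B_{2n-2i} gamma_{2i+1}.
   The index i = j - k with j = 0 .. n+k. *)
Definition star (phi : nat -> K) (r k n : int) : Prop :=
  gam phi (2 * n) =
    2 / ((2 * n + r)%:~R) *
    \sum_(j < absz ((n + k + 1)%R))
      (zbinom (2 * n + r) (2 * (j%:Z - k) + r) *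
       bernoulli (absz ((2 * n - 2 * (j%:Z - k))%R)) *
       gam phi (2 * (j%:Z - k) + 1)).

Definition starstar (phi : nat -> K) (r n : int) : Prop :=
  gam phi (2 * n) =
    \sum_(i < absz ((n + 1)%R))
      (2 / ((2 * i%:Z + r)%:~R) *
       zbinom (- 2 * i%:Z - r) (- 2 * n - r) *
       bernoulli (absz ((2 * n - 2 * i%:Z)%R)) *
       gam phi (2 * i%:Z + 1)).

End Defs.

(* Multiplying phi(x/(x-1)) = (1-x)^r phi(x) by (1-x)^(-r) turns phi \in F_r into the
   triangular system  gamma_N = sum_(i <= N) (-1)^i binom(N+r-1, N-i) gamma_i.
   Write r = 1 + p - i0 with p = 0 or i0 = 0.  For N >= i0, equation N says, after the
   rescaling a_i = gamma_i / (i-i0+p)!, that f(x) = sum_i (-1)^i a_i x^i satisfies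
   f(-x) = e^x f(x) at x^N; for N < i0 (so r = 1 - i0 <= 0) the rescaling
   c_i = gamma_i (-r-i)! gives c(-x) = e^x c(x) at x^N.  With b(x) = x/(e^x-1), one has
     e^x f(x) - f(-x) = (e^x - 1) (f(x) + b(x) (f(x) - f(-x))/x),
   and since b(x) + x/2 is even, f(-x) = e^x f(x) up to any degree amounts to the
   relations f_(2n) = -2 sum_i b_(2n-2i) f_(2i+1) in that range.  Undoing the rescalings
   gives ( * ) and ( ** ); the high-range relations with 2n < i0 only say gamma_(1-r) = 0
   when r is even. *)

From mathcomp Require Import all_boot all_order all_algebra.
From mathcomp Require Import ring zify.
From Stdlib Require Import FunctionalExtensionality.
Import Order.TTheory GRing.Theory Num.Theory.
Local Open Scope ring_scope.
Set Implicit Arguments. Unset Strict Implicit. Unset Printing Implicit Defensive.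

Section SeriesAlgebra.
Variable K : numFieldType.
Implicit Types f g h : nat -> K.

Definition sadd f g : nat -> K := fun n => f n + g n.
Definition sscal (c : K) f : nat -> K := fun n => c * f n.
Definition sneg f : nat -> K := fun n => (-1) ^+ n * f n.

Definition trunc_poly f n : {poly K} := \poly_(i < n.+1) f i.

Lemma smul_trunc_poly f g n m : (n <= m)%N ->
  smul f g n = (trunc_poly f m * trunc_poly g m)`_n.
Proof.
move=> le_nm; rewrite coefM /smul; apply: eq_bigr => i _; rewrite !coef_poly.
by rewrite !ifT //; have := ltn_ord i; lia.
Qed.

Lemma coefMl_eq_prefix (p q s : {poly K}) n :
  (forall j, (j <= n)%N -> p`_j = q`_j) -> (p * s)`_n = (q * s)`_n.
Proof.
move=> eq_pq; rewrite !coefM; apply: eq_bigr => i _.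
by rewrite eq_pq // -ltnS.
Qed.

Lemma smulC f g : smul f g = smul g f.
Proof.
apply: functional_extensionality => n.
by rewrite !(smul_trunc_poly _ _ (leqnn n)) mulrC.
Qed.

Lemma smulA f g h : smul (smul f g) h = smul f (smul g h).
Proof.
apply: functional_extensionality => n.
have trunc_smul u v j : (j <= n)%N ->
    (trunc_poly (smul u v) n)`_j = (trunc_poly u n * trunc_poly v n)`_j.
  by move=> le_jn; rewrite coef_poly ltnS le_jn (smul_trunc_poly _ _ le_jn).
rewrite !(smul_trunc_poly _ _ (leqnn n)).
rewrite (coefMl_eq_prefix _ (trunc_smul f g)) -mulrA mulrC [in RHS]mulrC.
by apply: coefMl_eq_prefix => j le_jn; rewrite trunc_smul // mulrC.
Qed.

Lemma smulDl f g h : smul (sadd f g) h = sadd (smul f h) (smul g h).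
Proof.
apply: functional_extensionality => n.
by rewrite /smul /sadd -big_split; apply: eq_bigr => i _; rewrite mulrDl.
Qed.

Lemma smulDr f g h : smul f (sadd g h) = sadd (smul f g) (smul f h).
Proof. by rewrite smulC smulDl !(smulC f). Qed.

Lemma smulZl c f g : smul (sscal c f) g = sscal c (smul f g).
Proof.
apply: functional_extensionality => n.
by rewrite /smul /sscal mulr_sumr; apply: eq_bigr => i _; rewrite mulrA.
Qed.

Lemma smulZr c f g : smul f (sscal c g) = sscal c (smul f g).
Proof. by rewrite smulC smulZl smulC. Qed.

Lemma smul1l f : smul (sone K) f = f.
Proof.
apply: functional_extensionality => n.
rewrite /smul big_ord_recl /sone /= mul1r subn0 big1 ?addr0 // => i _.
by rewrite mul0r.
Qed.

Lemma smul1r f : smul f (sone K) = f.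
Proof. by rewrite smulC smul1l. Qed.

Lemma smulXl f n : smul (sX K) f n = if n is m.+1 then f m else 0.
Proof.
rewrite /smul /sX; case: n => [|m].
  by rewrite big_ord_recl big_ord0 /= mul0r addr0.
rewrite big_ord_recl big_ord_recl /= mul0r add0r mul1r subSS subn0.
by rewrite big1 ?addr0 // => i _; rewrite mul0r.
Qed.

Lemma sneg_smul f g : sneg (smul f g) = smul (sneg f) (sneg g).
Proof.
apply: functional_extensionality => n; rewrite /sneg /smul mulr_sumr.
apply: eq_bigr => i _.
have -> : (-1) ^+ n = (-1) ^+ i * (-1) ^+ (n - i) :> K.
  by rewrite -exprD; congr (_ ^+ _); have := ltn_ord i; lia.
ring.
Qed.

End SeriesAlgebra.

Section Binomial.
Variable K : numFieldType.

Lemma sum_ord_widen (F : nat -> K) m n : (m <= n)%N ->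
  (forall i, (m <= i < n)%N -> F i = 0) ->
  \sum_(i < m) F i = \sum_(i < n) F i.
Proof.
move=> le_mn F0; rewrite (big_ord_widen n F le_mn) big_mkcond /=.
apply: eq_bigr => i _; case: ifP => // /negbT; rewrite -leqNgt => le_mi.
by rewrite F0 // le_mi ltn_ord.
Qed.

Lemma sum_ord_split (F : nat -> K) i N : (i <= N)%N ->
  \sum_(M < N) F M = \sum_(M < i) F M + \sum_(j < N - i) F (i + j)%N.
Proof.
move=> le_iN; rewrite -!(big_mkord xpredT) (big_cat_nat (leq0n i) le_iN) /=.
congr (_ + _); rewrite -{1}(add0n i) big_addn.
by rewrite big_mkord; apply: eq_bigr => j _; rewrite addnC.
Qed.

Lemma natr_fact_neq0 n : (n`!)%:R != 0 :> K.
Proof. by rewrite pnatr_eq0 -lt0n fact_gt0. Qed.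

Lemma natr_bin n k : (k <= n)%N ->
  'C(n, k)%:R = n`!%:R / (k`!%:R * (n - k)`!%:R) :> K.
Proof.
move=> le_kn; rewrite -(bin_fact le_kn) !natrM.
by field; rewrite !natr_fact_neq0.
Qed.

Definition gbinom (a : K) (n : nat) : K := (\prod_(l < n) (a - l%:R)) / (n`!)%:R.

Lemma gbinom0 a : gbinom a 0 = 1.
Proof. by rewrite /gbinom big_ord0 fact0 divr1. Qed.

Lemma gbinomS a n : gbinom (a + 1) n.+1 = gbinom a n.+1 + gbinom a n.
Proof.
rewrite /gbinom big_ord_recl big_ord_recr /=.
have -> : \prod_(i < n) (a + 1 - (bump 0 i)%:R) = \prod_(i < n) (a - i%:R).
  by apply: eq_bigr => i _; rewrite /bump /= add1n -addn1 natrD; ring.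
rewrite factS natrM -natr1.
have nz_n1 : n%:R + 1 != 0 :> K by rewrite natr1 pnatr_eq0.
by field; rewrite natr_fact_neq0 nz_n1.
Qed.

Lemma sum_gbinom_diag a n :
  \sum_(j < n.+1) gbinom (a + j%:R) j = gbinom (a + n.+1%:R) n.
Proof.
elim: n => [|n IHn]; first by rewrite big_ord_recl big_ord0 !gbinom0 addr0.
rewrite big_ord_recr /= IHn.
have -> : a + n.+2%:R = a + n.+1%:R + 1 by rewrite -natr1 addrA.
by rewrite gbinomS addrC.
Qed.

Lemma gbinom_nat n k : gbinom n%:R k = 'C(n, k)%:R.
Proof.
elim: n k => [|n IHn] [|k]; rewrite ?gbinom0 ?bin0 //.
  by rewrite /gbinom big_ord_recl /= subrr !mul0r.
by rewrite -natr1 gbinomS !IHn -natrD binS.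
Qed.

Lemma gbinomN b k : gbinom (- b) k = (-1) ^+ k * gbinom (b + k%:R - 1) k.
Proof.
rewrite /gbinom mulrA; congr (_ / _).
rewrite (eq_bigr (fun l : 'I_k => - (b + l%:R))); last by move=> l _; ring.
rewrite prodrN card_ord; congr (_ * _).
rewrite (reindex_inj rev_ord_inj) /=; apply: eq_bigr => l _.
by rewrite natrB // -natr1; ring.
Qed.

End Binomial.

Section OneMinusX.
Variable K : numFieldType.
Implicit Types a : K.

(* the coefficients of (1 - x)^(-a) *)
Definition omx_powN a : nat -> K := fun N => gbinom (N%:R + a - 1) N.

Lemma smul_omx_powN_geom a : smul (omx_powN a) (geom K) = omx_powN (a + 1).
Proof.
apply: functional_extensionality => N; rewrite /smul /geom /omx_powN.
under eq_bigr do rewrite mulr1.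
rewrite (eq_bigr (fun j : 'I_N.+1 => gbinom (a - 1 + j%:R) j)); last first.
  by move=> j _; congr gbinom; ring.
by rewrite sum_gbinom_diag; congr gbinom; rewrite -natr1; ring.
Qed.

Lemma smul_omx_powN_omx a : smul (omx_powN a) (one_minus_x K) = omx_powN (a - 1).
Proof.
apply: functional_extensionality => N; rewrite /smul /one_minus_x /omx_powN.
case: N => [|m]; first by rewrite big_ord_recl big_ord0 /= !gbinom0 subr0 mulr1 addr0.
rewrite big_ord_recr big_ord_recr /= big1; last first.
  move=> i _; have lt_im := ltn_ord i.
  have [-> ->] : (m.+1 - i == 0)%N = false /\ (m.+1 - i == 1)%N = false.
    by split; apply/eqP; lia.
  by rewrite subrr mulr0.
rewrite subSn // !subnn /= add0r subr0 sub0r mulr1 mulrN1.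
have pascal := gbinomS (m%:R + a - 1) m.
rewrite [m%:R + a - 1 + 1](_ : _ = m.+1%:R + a - 1) in pascal; last by rewrite -natr1; ring.
rewrite pascal [m.+1%:R + (a - 1) - 1](_ : _ = m%:R + a - 1); first by ring.
by rewrite -natr1; ring.
Qed.

Lemma omx_powN0 : omx_powN 0 = sone K.
Proof.
apply: functional_extensionality => N; rewrite /omx_powN /sone.
case: N => [|m]; first by rewrite gbinom0.
rewrite /gbinom big_ord_recr /= [m.+1%:R + 0 - 1 - m%:R](_ : _ = 0 :> K).
  by rewrite mulr0 mul0r.
by rewrite -natr1; ring.
Qed.

Lemma smul_spow_omx m a :
  smul (spow (one_minus_x K) m) (omx_powN a) = omx_powN (a - m%:R).
Proof.
elim: m a => [|m IHm] a; first by rewrite /spow /= smul1l subr0.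
rewrite /spow iterS -/(spow _ m) smulC -smulA smul_omx_powN_omx smulC IHm.
by rewrite -natr1; congr omx_powN; ring.
Qed.

Lemma smul_spow_geom m a :
  smul (spow (geom K) m) (omx_powN a) = omx_powN (a + m%:R).
Proof.
elim: m a => [|m IHm] a; first by rewrite /spow /= smul1l addr0.
rewrite /spow iterS -/(spow _ m) smulC -smulA smul_omx_powN_geom smulC IHm.
by rewrite -natr1; congr omx_powN; ring.
Qed.

Lemma smul_powr_omx_powN r : smul (powr K r) (omx_powN r%:~R) = sone K.
Proof.
case: r => [m|m] /=.
  by rewrite smul_spow_omx subrr omx_powN0.
rewrite [smul _ _](smul_spow_geom m.+1) NegzE mulrNz -omx_powN0.
by congr omx_powN; rewrite -natr1; ring.
Qed.

End OneMinusX.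

Section Substitution.
Variable K : numFieldType.
Implicit Types (f phi : nat -> K) (a : K).

Lemma yser_coef n : yser K n = if n is m.+1 then -1 else 0.
Proof. by rewrite /yser smulXl. Qed.

Lemma smul_yserl f N : smul (yser K) f N = - \sum_(M < N) f M.
Proof.
rewrite /smul big_ord_recl yser_coef mul0r add0r.
rewrite (eq_bigr (fun i : 'I_N => - f (N - i.+1)%N)); last first.
  by move=> i _; rewrite yser_coef mulN1r.
rewrite sumrN (reindex_inj rev_ord_inj) /=; congr (- _); apply: eq_bigr => i _.
by congr f; have := ltn_ord i; lia.
Qed.

Lemma spow_yser_small i N : (N < i)%N -> spow (yser K) i N = 0.
Proof.
elim: i N => [|i IHi] N //= lt_Ni.
rewrite -/(spow _ i) smul_yserl big1 ?oppr0 // => M _.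
by apply: IHi; have := ltn_ord M; lia.
Qed.

Lemma smul_omx_powN_spow_yser a i N :
  smul (omx_powN a) (spow (yser K) i) N =
  if (i <= N)%N then (-1) ^+ i * gbinom (N%:R + a - 1) (N - i) else 0.
Proof.
elim: i N => [|i IHi] N; first by rewrite /spow /= smul1r expr0 mul1r subn0.
rewrite [spow _ i.+1]/spow iterS -/(spow _ i) smulC smulA smul_yserl.
under eq_bigr do rewrite smulC IHi.
case: (leqP i.+1 N) => [le_iN|lt_Ni]; last first.
  by rewrite big1 ?oppr0 // => M _; case: (leqP i M) (ltn_ord M) => // *; lia.
pose G M := if (i <= M)%N then (-1) ^+ i * gbinom (M%:R + a - 1) (M - i) else 0.
rewrite (sum_ord_split G (ltnW le_iN)) big1 ?add0r /G; last first.
  by move=> M _; case: (leqP i M) (ltn_ord M) => // *; lia.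
under eq_bigr do rewrite leq_addr addKn.
have -> : (N - i = (N - i.+1).+1)%N by lia.
rewrite -mulr_sumr.
rewrite (eq_bigr (fun j : 'I_(N - i.+1).+1 => gbinom (i%:R + a - 1 + j%:R) j)); last first.
  by move=> j _; congr gbinom; rewrite natrD; ring.
rewrite sum_gbinom_diag exprS.
have -> : (N - i.+1).+1%:R = N%:R - i%:R :> K.
  by rewrite -natrB; [congr (_%:R); lia | lia].
by rewrite [i%:R + a - 1 + _](_ : _ = N%:R + a - 1); ring.
Qed.

Lemma smul_omx_powN_scomp a phi N :
  smul (omx_powN a) (scomp phi (yser K)) N =
  \sum_(i < N.+1) phi i * smul (omx_powN a) (spow (yser K) i) N.
Proof.
rewrite /smul /scomp.
pose G (j i : nat) := omx_powN a j * (phi i * spow (yser K) i (N - j)).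
rewrite (eq_bigr (fun j : 'I_N.+1 => \sum_(i < N.+1) G j i)) => [|j _]; last first.
  rewrite mulr_sumr (@sum_ord_widen _ (G j) (N - j).+1 N.+1) ?ltnS ?leq_subr //.
  move=> i /andP[lt_i _].
  by rewrite /G spow_yser_small ?mulr0.
rewrite exchange_big /=; apply: eq_bigr => i _; rewrite mulr_sumr.
by apply: eq_bigr => j _; rewrite /G; ring.
Qed.

Definition triang_rel (r : int) phi N := phi N =
  \sum_(i < N.+1) phi i * ((-1) ^+ i * gbinom (N%:R + r%:~R - 1) (N - i)).

Lemma inF_triang_rel r phi : inF r phi <-> forall N, triang_rel r phi N.
Proof.
have coef_scomp N : smul (omx_powN r%:~R) (scomp phi (yser K)) N =
    \sum_(i < N.+1) phi i * ((-1) ^+ i * gbinom (N%:R + r%:~R - 1) (N - i)).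
  rewrite smul_omx_powN_scomp; apply: eq_bigr => i _.
  by rewrite smul_omx_powN_spow_yser -ltnS ltn_ord.
split=> [phi_y N | triang].
  rewrite /triang_rel -coef_scomp.
  have -> : scomp phi (yser K) = smul (powr K r) phi by apply: functional_extensionality.
  by rewrite -smulA [smul (omx_powN _) _]smulC smul_powr_omx_powN smul1l.
have phiE : phi = smul (omx_powN r%:~R) (scomp phi (yser K)).
  by apply: functional_extensionality => N; rewrite coef_scomp; apply: triang.
by move=> N; rewrite {2}phiE -smulA smul_powr_omx_powN smul1l.
Qed.

End Substitution.

Section BernoulliSeries.
Variable K : numFieldType.
Implicit Types f g : nat -> K.

Definition sexp : nat -> K := fun n => 1 / (n`!)%:R.
Definition sexpm1_divX : nat -> K := fun n => 1 / (n.+1`!)%:R.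
Definition bern_egf (n : nat) : K := (bern_b_list K n)`_n.

Lemma bernoulliE n : bernoulli K n = n`!%:R * bern_egf n.
Proof. by []. Qed.

Lemma size_bern_b_list n : size (bern_b_list K n) = n.+1.
Proof. by elim: n => //= n IHn; rewrite size_rcons IHn. Qed.

Lemma nth_bern_b_list n k : (k <= n)%N -> (bern_b_list K n)`_k = bern_egf k.
Proof.
elim: n => [|n IHn]; first by rewrite leqn0 => /eqP ->.
rewrite leq_eqVlt => /orP [/eqP -> //|]; rewrite ltnS => le_kn /=.
by rewrite nth_rcons size_bern_b_list ltnS le_kn IHn.
Qed.

Lemma bern_egf0 : bern_egf 0 = 1.
Proof. by []. Qed.

Lemma bern_egfS m :
  bern_egf m.+1 = - \sum_(k < m.+1) bern_egf k / ((m.+2 - k)`!)%:R.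
Proof.
rewrite /bern_egf /= nth_rcons size_bern_b_list ltnn eqxx; congr (- _).
by apply: eq_bigr => k _; rewrite nth_bern_b_list // -ltnS.
Qed.

Lemma smul_sexpm1_divX_bern : smul sexpm1_divX bern_egf = sone K.
Proof.
rewrite smulC; apply: functional_extensionality => n; rewrite /smul /sone.
case: n => [|m].
  by rewrite big_ord_recl big_ord0 addr0 /sexpm1_divX /= mul1r divr1.
rewrite big_ord_recr /= subnn /sexpm1_divX bern_egfS /= divr1 mulr1.
rewrite (eq_bigr (fun k : 'I_m.+1 => bern_egf k / ((m.+2 - k)`!)%:R)) ?subrr //.
by move=> k _; rewrite mul1r; congr (_ / (_`!)%:R); have := ltn_ord k; lia.
Qed.

Lemma smul_eq0_prefix f g L : (forall m, (m < L)%N -> g m = 0) ->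
  forall m, (m < L)%N -> smul f g m = 0.
Proof.
move=> g0 m lt_mL; rewrite /smul big1 // => i _.
by rewrite g0 ?mulr0 //; apply: leq_ltn_trans lt_mL; apply: leq_subr.
Qed.

Lemma smul_sexpm1_divX_eq0 g L :
  (forall m, (m < L)%N -> smul sexpm1_divX g m = 0) <->
  (forall m, (m < L)%N -> g m = 0).
Proof.
split=> [ug0|]; last exact: smul_eq0_prefix.
have -> : g = smul bern_egf (smul sexpm1_divX g).
  by rewrite -smulA [smul bern_egf _]smulC smul_sexpm1_divX_bern smul1l.
exact: smul_eq0_prefix.
Qed.

Lemma smul_sexpm1_divX_inj f g : smul sexpm1_divX f = smul sexpm1_divX g -> f = g.
Proof.
move=> eq_fg; rewrite -[f]smul1l -[g]smul1l -smul_sexpm1_divX_bern.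
by rewrite ![smul sexpm1_divX _]smulC !smulA eq_fg.
Qed.

Lemma sum_alt_binomS n :
  \sum_(j < n.+1) (-1) ^+ j * 'C(n.+1, j.+1)%:R = 1 :> K.
Proof.
have := exprBn (1 : K) 1 n.+1.
rewrite subrr expr0n /= big_ord_recl /= expr0 bin0 mul1r expr1n mulr1 mulr1n.
move/esym/eqP; rewrite addrC addr_eq0 subn0 expr1n => /eqP sum_alt.
rewrite -[RHS]opprK -[in RHS]sum_alt -sumrN; apply: eq_bigr => j _.
by rewrite /bump /= add1n !expr1n !mulr1 exprS mulr_natr; ring.
Qed.

Lemma smul_sexp_sneg : smul sexp (sneg sexpm1_divX) = sexpm1_divX.
Proof.
rewrite smulC; apply: functional_extensionality => n.
rewrite /smul /sneg /sexpm1_divX /sexp.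
transitivity ((\sum_(j < n.+1) (-1) ^+ j * 'C(n.+1, j.+1)%:R) * (1 / (n.+1`!)%:R) : K).
  rewrite mulr_suml; apply: eq_bigr => j _.
  rewrite natr_bin ?subSS //.
  by field; rewrite !natr_fact_neq0.
by rewrite sum_alt_binomS !mul1r.
Qed.

Lemma smulX_sexpm1_divX : smul (sX K) sexpm1_divX = sadd sexp (sscal (-1) (sone K)).
Proof.
apply: functional_extensionality => n; rewrite smulXl /sadd /sscal /sexp /sone.
by case: n => [|m] /=; rewrite ?divr1 ?mulr1 ?subrr // /sexpm1_divX mulr0 addr0.
Qed.

Lemma sneg_bern_egf : sadd (sneg bern_egf) (sscal (-1) (sX K)) = bern_egf.
Proof.
apply: smul_sexpm1_divX_inj; rewrite smul_sexpm1_divX_bern smulDr smulZr.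
rewrite -smul_sexp_sneg smulA -sneg_smul smul_sexpm1_divX_bern.
have -> : sneg (sone K) = sone K.
  by apply: functional_extensionality => -[|n]; rewrite /sneg /sone ?expr0 ?mul1r ?mulr0.
rewrite smul1r smul_sexp_sneg smulC smulX_sexpm1_divX.
by apply: functional_extensionality => n; rewrite /sadd /sscal; ring.
Qed.

Lemma bern_egf_odd m : bern_egf m.*2.+1 = if m == 0%N then - 1 / 2 else 0.
Proof.
have := congr1 (fun F => F m.*2.+1) sneg_bern_egf.
rewrite /sadd /sneg /sscal /sX -signr_odd /= odd_double /= expr1.
have nz2 : (2 : K) != 0 by rewrite pnatr_eq0.
case: (m =P 0%N) => [-> | /eqP nz_m] /= eq_b; apply: (mulfI nz2).
  transitivity (bern_egf 1 + bern_egf 1); first by ring.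
  by rewrite -{2}eq_b; field.
have /negbTE ne_1 : (m.*2.+1 != 1)%N by rewrite eqSS double_eq0.
move: eq_b; rewrite ne_1 mulr0 addr0 => eq_b.
transitivity (bern_egf m.*2.+1 + bern_egf m.*2.+1); first by ring.
by rewrite -{2}eq_b; ring.
Qed.

End BernoulliSeries.

Section BernoulliTransform.
Variable K : numFieldType.
Implicit Types f : nat -> K.

Definition odd_shift f : nat -> K := fun n => if odd n then 0 else f n.+1.

Definition bern_op f : nat -> K :=
  sadd f (sscal 2 (smul (odd_shift f) (bern_egf K))).

Definition exp_sym f N : Prop := (-1) ^+ N * f N = smul (sexp K) f N.

Lemma sneg_sub_smul_sexp f n :
  (-1) ^+ n * f n - smul (sexp K) f n =
  - smul (sX K) (smul (sexpm1_divX K) (bern_op f)) n.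
Proof.
rewrite /bern_op smulDr smulZr -smulA (smulC _ (odd_shift f)) smulA.
rewrite smul_sexpm1_divX_bern smul1r smulDr smulZr -smulA smulX_sexpm1_divX.
rewrite smulDl smulZl smul1l /sadd /sscal smulXl /odd_shift.
case: n => [|m]; first by rewrite expr0; ring.
by rewrite -signr_odd /=; case: (odd m) => /=; rewrite ?expr0 ?expr1; ring.
Qed.

Lemma sum_ord_double (F : nat -> K) n :
  \sum_(j < n.*2) F j = \sum_(i < n) F i.*2 + \sum_(i < n) F i.*2.+1.
Proof.
elim: n => [|n IHn]; first by rewrite !big_ord0 addr0.
by rewrite doubleS !big_ord_recr /= IHn; ring.
Qed.

Lemma bern_op_even f n : bern_op f n.*2 =
  f n.*2 + 2 * \sum_(i < n.+1) f i.*2.+1 * bern_egf K (n.*2 - i.*2).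
Proof.
rewrite /bern_op /sadd /sscal; congr (_ + 2 * _).
rewrite /smul big_ord_recr /=.
rewrite (sum_ord_double (fun j => odd_shift f j * bern_egf K (n.*2 - j))).
rewrite [X in _ + X + _]big1 ?addr0 => [|i _]; last first.
  by rewrite /odd_shift /= odd_double mul0r.
rewrite [RHS]big_ord_recr /odd_shift /= odd_double.
by congr (_ + _); apply: eq_bigr => i _; rewrite odd_double.
Qed.

Lemma bern_op_odd f n : bern_op f n.*2.+1 = 0.
Proof.
rewrite /bern_op /sadd /sscal.
have -> : smul (odd_shift f) (bern_egf K) n.*2.+1 = - f n.*2.+1 / 2.
  rewrite /smul -doubleS.
  rewrite (sum_ord_double (fun j => odd_shift f j * bern_egf K (n.*2.+1 - j))).
  rewrite [X in _ + X]big1 ?addr0 => [|i _]; last first.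
    by rewrite /odd_shift /= odd_double mul0r.
  rewrite big_ord_recr /= big1 ?add0r => [|i _]; last first.
    have lt_in := ltn_ord i.
    rewrite (_ : n.*2.+1 - i.*2 = (n - i).*2.+1)%N; last by rewrite doubleB; lia.
    by rewrite bern_egf_odd ifF ?mulr0 //; apply/eqP; lia.
  rewrite /odd_shift odd_double (_ : n.*2.+1 - n.*2 = 0.*2.+1)%N; last by lia.
  by rewrite bern_egf_odd /=; ring.
have nz2 : (2 : K) != 0 by rewrite pnatr_eq0.
by field.
Qed.

Lemma bern_op_eq0_even f (P : nat -> Prop) :
  (forall m, P m -> bern_op f m = 0) <-> (forall n, P n.*2 -> bern_op f n.*2 = 0).
Proof.
split=> [op0 n|op0 m]; first exact: op0.
by rewrite -[m]odd_double_half; case: (odd m) => /=; [rewrite bern_op_odd | apply: op0].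
Qed.

Lemma exp_sym_prefix f L :
  (forall N, (N <= L)%N -> exp_sym f N) <-> (forall m, (m < L)%N -> bern_op f m = 0).
Proof.
have exp_symE N : exp_sym f N <->
    smul (sX K) (smul (sexpm1_divX K) (bern_op f)) N = 0.
  split=> [sym_N | zero_N]; apply/eqP.
    by rewrite -oppr_eq0 -sneg_sub_smul_sexp subr_eq0 sym_N.
  by rewrite -subr_eq0 sneg_sub_smul_sexp zero_N oppr0.
rewrite -smul_sexpm1_divX_eq0; split=> [sym m lt_mL | op0 [|N] le_NL].
- by have /exp_symE := sym m.+1 lt_mL; rewrite smulXl.
- by apply/exp_symE; rewrite smulXl.
- by apply/exp_symE; rewrite smulXl op0.
Qed.

Lemma exp_sym_all f : (forall N, exp_sym f N) <-> (forall m, bern_op f m = 0).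
Proof.
split=> [sym m | op0 N].
  by apply: (proj1 (exp_sym_prefix f m.+1)) => // N _; apply: sym.
by apply: (proj2 (exp_sym_prefix f N)) => // m _; apply: op0.
Qed.

End BernoulliTransform.

Section TriangularRanges.
Variable K : numFieldType.
Implicit Types (f phi : nat -> K) (r : int).

Lemma smul_sexp_snegE f N :
  smul (sexp K) (sneg f) N = \sum_(j < N.+1) (-1) ^+ j * f j / (N - j)`!%:R.
Proof. by rewrite smulC /smul; apply: eq_bigr => j _; rewrite /sneg /sexp; ring. Qed.

Definition high_weight (p i0 : nat) phi : nat -> K :=
  fun i => if (i0 <= i)%N then phi i / (i - i0 + p)`!%:R else 0.

Definition low_weight (s : nat) phi : nat -> K := fun i => phi i * (s - i)`!%:R.

Lemma triang_rel_high (p i0 : nat) r phi N :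
  (i0 == 0)%N || (p == 0)%N -> r = 1 + p%:Z - i0%:Z -> (i0 <= N)%N ->
  triang_rel r phi N <-> exp_sym (sneg (high_weight p i0 phi)) N.
Proof.
move=> p_i0 r_def le_i0N; set a := high_weight p i0 phi.
set M := (N - i0 + p)%N; have nz_M := natr_fact_neq0 K M.
have rM : N%:R + r%:~R - 1 = M%:R :> K.
  by rewrite r_def /M !intrD intrN !natrD natrB //; ring.
have termE i : (i <= N)%N ->
    phi i * ((-1) ^+ i * gbinom M%:R (N - i)) = M`!%:R * ((-1) ^+ i * a i / (N - i)`!%:R).
  move=> le_iN; rewrite gbinom_nat /a /high_weight.
  case: ifP => [le_i0i | /negbT]; last first.
    rewrite -ltnNge => lt_ii0; rewrite bin_small; first by rewrite !(mul0r, mulr0).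
    by rewrite /M; case/orP: p_i0 => /eqP; lia.
  rewrite natr_bin; last by rewrite /M; lia.
  rewrite (_ : M - (N - i) = i - i0 + p)%N; last by rewrite /M; lia.
  by field; rewrite !natr_fact_neq0.
rewrite /triang_rel rM /exp_sym /sneg signrMK smul_sexp_snegE.
rewrite (eq_bigr (fun i : 'I_N.+1 => M`!%:R * ((-1) ^+ i * a i / (N - i)`!%:R))); last first.
  by move=> i _; rewrite termE // -ltnS.
rewrite -mulr_sumr -[phi N](mulfVK nz_M) [_ / _ * _]mulrC.
have -> : phi N / M`!%:R = a N by rewrite /a /high_weight le_i0N.
by split=> [/(mulfI nz_M) | ->].
Qed.

Lemma exp_sym_high_weight_small (p i0 : nat) phi N : (N < i0)%N ->
  exp_sym (sneg (high_weight p i0 phi)) N.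
Proof.
move=> lt_Ni0; rewrite /exp_sym /sneg signrMK smul_sexp_snegE /high_weight.
rewrite leqNgt lt_Ni0 big1 // => j _.
by rewrite ifF ?mulr0 ?mul0r //; apply/negbTE; rewrite -ltnNge; have := ltn_ord j; lia.
Qed.

Lemma triang_rel_low (s : nat) r phi N :
  r = - s%:Z -> (N <= s)%N ->
  triang_rel r phi N <-> exp_sym (low_weight s phi) N.
Proof.
move=> r_def le_Ns; have nz_sN := natr_fact_neq0 K (s - N).
set T := \sum_(i < N.+1) phi i * 'C(s - i, N - i)%:R.
have triangE : \sum_(i < N.+1) phi i * ((-1) ^+ i * gbinom (N%:R + r%:~R - 1) (N - i)) =
    (-1) ^+ N * T.
  rewrite /T mulr_sumr; apply: eq_bigr => i _; have le_iN : (i <= N)%N by rewrite -ltnS.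
  rewrite r_def intrN [N%:R - _ - 1](_ : _ = - ((s - N)%:R + 1)); last by rewrite natrB //; ring.
  rewrite gbinomN [_ + _ - 1](_ : _ = (s - i)%:R); last by rewrite !natrB //; [ring | lia].
  rewrite gbinom_nat (_ : (-1) ^+ N = (-1) ^+ i * (-1) ^+ (N - i) :> K) ?mulrA; first by ring.
  by rewrite -exprD subnKC.
have smulE : smul (sexp K) (low_weight s phi) N = (s - N)`!%:R * T.
  rewrite smulC /smul /T mulr_sumr; apply: eq_bigr => i _; have le_iN : (i <= N)%N by rewrite -ltnS.
  rewrite natr_bin; last by lia.
  rewrite (_ : s - i - (N - i) = s - N)%N; last by lia.
  by rewrite /low_weight /sexp; field; rewrite !natr_fact_neq0.
rewrite /triang_rel /exp_sym triangE smulE /low_weight.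
split=> [-> | sym]; first by rewrite mulrA signrMK mulrC.
apply: (mulIf nz_sN); apply: (@mulfI _ ((-1) ^+ N)); first by rewrite signr_eq0.
by rewrite sym mulrA signrMK mulrC.
Qed.

End TriangularRanges.

Section BernoulliRelations.
Variable K : numFieldType.
Implicit Types (a phi : nat -> K) (r : int).

Definition bern_even_rel a n : Prop :=
  a n.*2 = 2 * \sum_(i < n.+1) a i.*2.+1 * bern_egf K (n.*2 - i.*2).

Lemma bern_op_sneg_even a n : bern_op (sneg a) n.*2 = 0 <-> bern_even_rel a n.
Proof.
rewrite bern_op_even /sneg -signr_odd odd_double expr0 mul1r.
have -> : \sum_(i < n.+1) (-1) ^+ i.*2.+1 * a i.*2.+1 * bern_egf K (n.*2 - i.*2) =
    - \sum_(i < n.+1) a i.*2.+1 * bern_egf K (n.*2 - i.*2).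
  rewrite -sumrN; apply: eq_bigr => i _.
  by rewrite -signr_odd /= odd_double /= expr1; ring.
rewrite /bern_even_rel mulrN; split=> [/eqP | ->]; last by rewrite subrr.
by rewrite subr_eq0 => /eqP.
Qed.

Lemma triang_rel_low_all (s : nat) r phi : r = - s%:Z ->
  (forall N, (N <= s)%N -> triang_rel r phi N) <->
  (forall n, (n.*2 < s)%N -> bern_op (low_weight s phi) n.*2 = 0).
Proof.
move=> r_def; rewrite -(bern_op_eq0_even _ (fun m => m < s)%N) -exp_sym_prefix.
by split=> triang N le_Ns; apply/(triang_rel_low _ r_def le_Ns)/triang.
Qed.

End BernoulliRelations.

Section PaperConditions.
Variable K : numFieldType.
Implicit Types (phi : nat -> K) (r k : int).

Lemma gam_eq0 phi (x : int) : x < 0 -> gam phi x = 0.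
Proof. by case: x. Qed.

Lemma zbinom_nat (a b : nat) : zbinom K a b = 'C(a, b)%:R.
Proof.
rewrite /zbinom /= -gbinom_nat /gbinom; congr (_ / _).
by apply: eq_bigr => i _; rewrite intrB.
Qed.

Lemma sum_shift_int k (n : nat) (F : int -> K) :
  - k <= n%:Z -> (forall i, i < 0 -> F i = 0) ->
  \sum_(j < absz (n%:Z + k + 1)%R) F (j%:Z - k) =
  \sum_(i < n.+1) (if - k <= i%:Z then F i%:Z else 0).
Proof.
move=> le_kn F0; case: k le_kn => [k | k] le_kn.
  rewrite [absz _](_ : _ = k + n.+1)%N; last by lia.
  rewrite (sum_ord_split (fun j => F (j%:Z - k%:Z)) (leq_addr _ _)) big1 ?add0r; last first.
    by move=> j _; apply: F0; have := ltn_ord j; lia.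
  rewrite [(k + _ - _)%N](_ : _ = n.+1); last by lia.
  by apply: eq_bigr => i _; rewrite ifT; [congr F | ]; lia.
rewrite [absz _](_ : _ = n - k)%N; last by lia.
have le_kn' : (k.+1 <= n.+1)%N by lia.
rewrite (sum_ord_split (fun i => if - Negz k <= i%:Z then F i%:Z else 0) le_kn').
rewrite [in RHS]big1 ?add0r => [|j _]; last by rewrite ifF //; have := ltn_ord j; lia.
rewrite [(n.+1 - _)%N](_ : _ = n - k)%N; last by lia.
by apply: eq_bigr => j _; rewrite ifT; [congr F | ]; lia.
Qed.

Lemma starstar_iff_bern_op (s : nat) r phi (n : nat) :
  r = - s%:Z -> (n.*2 < s)%N ->
  starstar phi r n <-> bern_op (low_weight s phi) n.*2 = 0.
Proof.
move=> r_def lt_ns; rewrite /starstar bern_op_even.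
rewrite [absz _](_ : _ = n.+1); last by lia.
rewrite [2 * n%:Z](_ : _ = n.*2%:Z); last by lia.
set T := \sum_(i < n.+1) low_weight s phi i.*2.+1 * bern_egf K (n.*2 - i.*2).
have nz_sn := natr_fact_neq0 K (s - n.*2).
have sumE : \sum_(i < n.+1) 2 / (2 * i%:Z + r)%:~R * zbinom K (- 2 * i%:Z - r) (- 2 * n%:Z - r) *
      bernoulli K (absz (n.*2%:Z - 2 * i%:Z)%R) * gam phi (2 * i%:Z + 1) =
    - (2 / (s - n.*2)`!%:R) * T.
  rewrite /T mulr_sumr; apply: eq_bigr => i _; have lt_in := ltn_ord i.
  rewrite [2 * i%:Z + r](_ : _ = - (s - i.*2)%N%:Z); last by lia.
  rewrite [- 2 * i%:Z - r](_ : _ = (s - i.*2)%N%:Z); last by lia.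
  rewrite [- 2 * n%:Z - r](_ : _ = (s - n.*2)%N%:Z); last by lia.
  rewrite [absz _](_ : _ = n.*2 - i.*2)%N; last by lia.
  rewrite [2 * i%:Z + 1](_ : _ = i.*2.+1%N%:Z); last by lia.
  rewrite zbinom_nat bernoulliE mulrNz -pmulrn /= /low_weight natr_bin; last by lia.
  rewrite [(s - i.*2 - _)%N](_ : _ = n.*2 - i.*2)%N; last by lia.
  rewrite [(s - i.*2)%N](_ : _ = (s - i.*2.+1).+1)%N; last by lia.
  by rewrite factS natrM; field; rewrite !natr_fact_neq0 addrC natr1 pnatr_eq0.
rewrite sumE /= /low_weight; split=> [-> | op0]; first by field; rewrite nz_sn.
have phiE : phi n.*2 * (s - n.*2)`!%:R = - (2 * T) by apply/eqP; rewrite -addr_eq0 op0.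
by rewrite -(mulfK nz_sn (phi n.*2)) phiE; field.
Qed.

End PaperConditions.

Section Characterization.
Variable K : numFieldType.
Variables (p i0 : nat) (r : int) (phi : nat -> K).
Hypothesis p_i0 : (i0 == 0)%N || (p == 0)%N.
Hypothesis r_def : r = 1 + p%:Z - i0%:Z.

Lemma triang_rel_high_all :
  (forall N, (i0 <= N)%N -> triang_rel r phi N) <->
  (forall n, bern_even_rel (high_weight p i0 phi) n).
Proof.
set a := high_weight p i0 phi.
have -> : (forall N, (i0 <= N)%N -> triang_rel r phi N) <-> (forall N, exp_sym (sneg a) N).
  split=> [triang N | sym N le_i0N]; last exact/(triang_rel_high _ p_i0 r_def le_i0N).
  case: (leqP i0 N) => [le_i0N | lt_Ni0]; last exact: exp_sym_high_weight_small.
  exact/(triang_rel_high _ p_i0 r_def le_i0N)/triang.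
rewrite exp_sym_all; split=> [op0 n | rel m]; first exact/bern_op_sneg_even/op0.
by apply: (proj2 (bern_op_eq0_even _ (fun=> True))) => // n _; apply/bern_op_sneg_even.
Qed.

Lemma inF_iff_bern_rel :
  inF r phi <->
  (forall n, bern_even_rel (high_weight p i0 phi) n) /\
  (forall n, (n.*2 < i0.-1)%N -> bern_op (low_weight i0.-1 phi) n.*2 = 0).
Proof.
rewrite inF_triang_rel -triang_rel_high_all.
have -> : (forall n, (n.*2 < i0.-1)%N -> bern_op (low_weight i0.-1 phi) n.*2 = 0) <->
    (forall N, (N < i0)%N -> triang_rel r phi N).
  case: i0 p_i0 r_def => [|s] p_s r_s /=; first by split=> // _ n; rewrite ltn0.
  have r_sN : r = - s%:Z by case/orP: p_s => /eqP; lia.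
  exact: iff_sym (triang_rel_low_all phi r_sN).
split=> [triang | [high low] N]; first by split=> N _; apply: triang.
by case: (leqP i0 N) => [/high | /low].
Qed.

Lemma star_iff_bern_even_rel k (e n : nat) :
  r = 2 * k + e%:Z -> (e <= 1)%N -> (i0 <= n.*2)%N ->
  star phi r k n <-> bern_even_rel (high_weight p i0 phi) n.
Proof.
move=> r_k le_e1 le_i0n; set a := high_weight p i0 phi.
have le_kn : - k <= n%:Z by case/orP: p_i0 => /eqP; lia.
pose F i := zbinom K (2 * n%:Z + r) (2 * i + r) *
  bernoulli K (absz (2 * n%:Z - 2 * i)%R) * gam phi (2 * i + 1).
rewrite /star (sum_shift_int (F := F)) // => [|i lt_i0]; last first.
  by rewrite /F gam_eq0 ?mulr0 //; lia.
set W := (n.*2 - i0 + p)%N; have nz_W := natr_fact_neq0 K W.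
have sumE : \sum_(i < n.+1) (if - k <= i%:Z then F i%:Z else 0) =
    W.+1%:R * W`!%:R * \sum_(i < n.+1) a i.*2.+1 * bern_egf K (n.*2 - i.*2).
  rewrite mulr_sumr; apply: eq_bigr => i _; have lt_in := ltn_ord i.
  rewrite /a /high_weight; case: (leqP i0 i.*2.+1) => [le_i0i | lt_ii0]; last first.
    by rewrite ifF ?mul0r ?mulr0 //; apply/negbTE; case/orP: p_i0 => /eqP; lia.
  rewrite ifT /F; last by lia.
  set V := (i.*2.+1 - i0 + p)%N.
  rewrite [2 * n%:Z + r](_ : _ = W.+1%:Z); last by rewrite /W; lia.
  rewrite [2 * i%:Z + r](_ : _ = V%:Z); last by rewrite /V; lia.
  rewrite [absz _](_ : _ = n.*2 - i.*2)%N; last by lia.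
  rewrite [2 * i%:Z + 1](_ : _ = i.*2.+1%:Z); last by lia.
  rewrite zbinom_nat bernoulliE /= natr_bin; last by rewrite /V /W; lia.
  rewrite [(W.+1 - V)%N](_ : _ = n.*2 - i.*2)%N; last by rewrite /V /W; lia.
  by rewrite factS natrM; field; rewrite !natr_fact_neq0.
rewrite [2 * n%:Z](_ : _ = n.*2%:Z) ?sumE; last by lia.
rewrite [n.*2%:Z + r](_ : _ = W.+1%:Z) /=; last by rewrite /W; lia.
have -> : phi n.*2 = W`!%:R * a n.*2 by rewrite /a /high_weight le_i0n mulrC mulfVK.
rewrite /bern_even_rel -pmulrn mulrA -[W.+1%:R]natr1 mulrA.
have nz_W1 : W%:R + 1 != 0 :> K by rewrite natr1 pnatr_eq0.
rewrite (mulfVK nz_W1) [2 * _]mulrC -mulrA.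
by split=> [/(mulfI nz_W) | ->].
Qed.

Lemma bern_even_rel_small n : (n.*2 < i0)%N ->
  bern_even_rel (high_weight p i0 phi) n <-> (i0 = n.*2.+1 -> phi i0 = 0).
Proof.
move=> lt_ni0; rewrite /bern_even_rel big_ord_recr /= big1 ?add0r => [|i _]; last first.
  by rewrite /high_weight ifF ?mul0r //; apply/negbTE; rewrite -ltnNge; have := ltn_ord i; lia.
rewrite /high_weight subnn bern_egf0 mulr1 [in LHS]ifF; last by apply/negbTE; rewrite -ltnNge.
case: (i0 =P n.*2.+1) => [i0_odd | ne_i0]; last first.
  by rewrite ifF ?mulr0; [split | apply/negbTE; rewrite -ltnNge; lia].
rewrite -i0_odd leqnn subnn.
have -> : p = 0%N by move: p_i0; rewrite i0_odd; case/orP => /eqP; lia.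
have nz2 : (2 : K) != 0 by rewrite pnatr_eq0.
rewrite divr1; split=> [/esym/eqP | -> //]; last by rewrite mulr0.
by rewrite mulf_eq0 (negbTE nz2) => /eqP.
Qed.

Lemma bern_even_rel_split :
  (forall n, bern_even_rel (high_weight p i0 phi) n) <->
  (forall n, (i0 <= n.*2)%N -> bern_even_rel (high_weight p i0 phi) n) /\
  (forall n, (n.*2 < i0)%N -> bern_even_rel (high_weight p i0 phi) n).
Proof.
split=> [rel | [high low] n]; first by split=> n _; apply: rel.
by case: (leqP i0 n.*2) => [/high | /low].
Qed.

Lemma star_range_iff k (e : nat) (L : int) :
  r = 2 * k + e%:Z -> (e <= 1)%N ->
  (forall n : int, L <= n <-> 0 <= n /\ i0%:Z <= 2 * n) ->
  (forall n : int, L <= n -> star phi r k n) <->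
  (forall n, (i0 <= n.*2)%N -> bern_even_rel (high_weight p i0 phi) n).
Proof.
move=> r_k le_e1 boundL; split=> [star_n n le_i0n | rel n /boundL [n_ge0 le_i0n]].
  by apply/(star_iff_bern_even_rel r_k le_e1 le_i0n)/star_n/boundL; split; lia.
case: n n_ge0 le_i0n => // n _ le_i0n; have le_i0n' : (i0 <= n.*2)%N by lia.
exact/(star_iff_bern_even_rel r_k le_e1 le_i0n')/rel.
Qed.

Lemma starstar_range_iff k (e : nat) :
  r = 2 * k + e%:Z -> (e <= 1)%N ->
  (r < 0 -> forall n : int, 0 <= n <= - k - 1 -> starstar phi r n) <->
  (forall n, (n.*2 < i0.-1)%N -> bern_op (low_weight i0.-1 phi) n.*2 = 0).
Proof.
move=> r_k le_e1; case: i0 p_i0 r_def => [|s] p_s r_s /=.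
  by split=> // _ r_neg; lia.
have r_sN : r = - s%:Z by case/orP: p_s => /eqP; lia.
split=> [starstar_n n lt_ns | op0 r_neg [n | //] /andP[_ le_nk]].
  by apply/(starstar_iff_bern_op phi r_sN lt_ns)/starstar_n; [lia | apply/andP; split; lia].
have lt_ns : (n.*2 < s)%N by lia.
exact/(starstar_iff_bern_op phi r_sN lt_ns)/op0.
Qed.

Lemma gam_iff_bern_even_rel k : r = 2 * k ->
  (r <= 0 -> gam phi (1 - r) = 0) <->
  (forall n, (n.*2 < i0)%N -> bern_even_rel (high_weight p i0 phi) n).
Proof.
move=> r_k; split=> [gam0 n lt_ni0 | small r_le0].
  have r_i0 : r = 1 - i0%:Z by case/orP: p_i0 => /eqP; lia.
  have r_le0 : r <= 0 by lia.
  apply/(bern_even_rel_small lt_ni0) => _.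
  by move: (gam0 r_le0); rewrite r_i0 opprB addrC subrK.
have i0E : i0 = (`|- k|%N).*2.+1 by case/orP: p_i0 => /eqP; lia.
have lt_ki0 : ((`|- k|%N).*2 < i0)%N by rewrite i0E.
have phi0 := (bern_even_rel_small lt_ki0).1 (small _ lt_ki0) i0E.
by rewrite [1 - r](_ : _ = i0%:Z) //; lia.
Qed.

Lemma bern_even_rel_small_odd k : r = 2 * k + 1 ->
  forall n, (n.*2 < i0)%N -> bern_even_rel (high_weight p i0 phi) n.
Proof.
move=> r_k n lt_ni0; apply/(bern_even_rel_small lt_ni0) => i0_odd.
by case/orP: p_i0 => /eqP; lia.
Qed.

Lemma inF_even k : r = 2 * k ->
  inF r phi <->
  (forall n : int, Num.max 0 (1 - k) <= n -> star phi r k n) /\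
  (r <= 0 -> gam phi (1 - r) = 0) /\
  (r < 0 -> forall n : int, 0 <= n <= - k - 1 -> starstar phi r n).
Proof.
move=> r_k; have r_k0 : r = 2 * k + 0%:Z by rewrite addr0.
have boundL (n : int) : Num.max 0 (1 - k) <= n <-> 0 <= n /\ i0%:Z <= 2 * n.
  by case/orP: p_i0 => /eqP; split=> [|[]]; lia.
rewrite inF_iff_bern_rel bern_even_rel_split.
rewrite (star_range_iff r_k0 _ boundL) // (gam_iff_bern_even_rel r_k) (starstar_range_iff r_k0) //.
by rewrite and_assoc.
Qed.

Lemma inF_odd k : r = 2 * k + 1 ->
  inF r phi <->
  (forall n : int, Num.max 0 (- k) <= n -> star phi r k n) /\
  (r < 0 -> forall n : int, 0 <= n <= - k - 1 -> starstar phi r n).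
Proof.
move=> r_k; have boundL (n : int) : Num.max 0 (- k) <= n <-> 0 <= n /\ i0%:Z <= 2 * n.
  by case/orP: p_i0 => /eqP; split=> [|[]]; lia.
rewrite inF_iff_bern_rel bern_even_rel_split.
rewrite (star_range_iff r_k _ boundL) // (starstar_range_iff r_k) //.
by have := bern_even_rel_small_odd r_k; tauto.
Qed.

End Characterization.

Theorem theorem5p9 (K : numFieldType) (phi : nat -> K) (r : int) :
  inF r phi <->
  ((forall k : int, r = 2 * k ->
      (forall n : int, Num.max 0 (1 - k) <= n -> star phi r k n) /\
      (r <= 0 -> gam phi (1 - r) = 0) /\
      (r < 0 -> forall n : int, 0 <= n <= - k - 1 -> starstar phi r n)) /\
   (forall k : int, r = 2 * k + 1 ->
      (forall n : int, Num.max 0 (- k) <= n -> star phi r k n) /\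
      (r < 0 -> forall n : int, 0 <= n <= - k - 1 -> starstar phi r n))).
Proof.
have [p [i0 [p_i0 r_def]]] :
    exists p i0 : nat, ((i0 == 0)%N || (p == 0)%N) /\ r = 1 + p%:Z - i0%:Z.
  have [r_pos | r_le0] := ltrP 0 r.
    by exists `|r - 1|%N, 0%N; split; [rewrite eqxx | lia].
  by exists 0%N, `|1 - r|%N; split; [rewrite eqxx orbT | lia].
have [k [r_k | r_k]] : exists k, r = 2 * k \/ r = 2 * k + 1 by exists (r %/ 2)%Z; lia.
- rewrite (inF_even phi p_i0 r_def r_k).
  split=> [conds | [even _]]; last exact: even k r_k.
  by split=> k' r_k'; [have -> : k' = k by lia | lia].
- rewrite (inF_odd phi p_i0 r_def r_k).
  split=> [conds | [_ odd]]; last exact: odd k r_k.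
  by split=> k' r_k'; [lia | have -> : k' = k by lia].
Qed.
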